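(* Let $t:\Sigma^*\to\Omega^*$ be a rational partial function with suffix-closed domain $X=\mathrm{dom}(t)$. If the right congruence $\mathcal R_t$ has a critical tuple, then $X$ contains a linear fooling set for $t$.
   Context: For words $x,y$ let $x\wedge y$ be their longest common suffix and $\|x,y\|=|x|+|y|-2|x\wedge y|$. Define $u\mathrel{\mathcal R_t}v$ iff (i) $\{z:uz\in X\}=\{z:vz\in X\}$ and (ii) the set $\{\|t(uw),t(vw)\|: uw,vw\in X\}$ is finite; $\mathcal R_t$ is a right congruence (of finite index since $t$ is rational). A critical tuple in a right congruence $\sim$ is $(u_2,v_2,u,v)$ with $|u_2|=|v_2|\ge1$, $u=u_1u_2$, $v=v_1v_2$ for some $u_1,v_1$, and $u_2w\not\sim v_2w$ for all $w\in\{u,v\}^*$. A linear fooling scheme for $t$ is $(u_2,v_2,u,v,Z)$ with $u_2$ a suffix of $u$, $v_2$ a suffix of $v$, $|u_2|=|v_2|$, $\{u_2,v_2\}\{u,v\}^*Z\subseteq\mathrm{dom}(t)$, and for each $n$ some $z_n\in Z$ with $|z_n|\in O(n)$ and $t(u_2wz_n)\ne t(v_2wz_n)$ for all $w\in\{u,v\}^{\le n}$; $\{u_2,v_2\}\{u,v\}^*Z$ is then a linear fooling set, and $X$ contains one if such a set is a subset of $X$. *)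

From mathcomp Require Import all_boot.
Set Implicit Arguments. Unset Strict Implicit. Unset Printing Implicit Defensive.

Section Defs.
Variables (Sigma Omega : finType).

Record transducer := Transducer {
  tstate : finType;
  tinit : pred tstate;
  tfin : pred tstate;
  ttrans : seq (tstate * seq Sigma * seq Omega * tstate) }.

Inductive trun (T : transducer) : tstate T -> seq Sigma -> seq Omega -> tstate T -> Prop :=
| trun_nil p : trun p [::] [::] p
| trun_step p a b r u v q :
    (p, a, b, r) \in ttrans T -> trun r u v q -> trun p (a ++ u) (b ++ v) q.

Definition taccepts (T : transducer) (u : seq Sigma) (v : seq Omega) : Prop :=
  exists (p q : tstate T), [/\ tinit p, tfin q & trun p u v q].

Definition rational_fun (t : seq Sigma -> option (seq Omega)) : Prop :=
  exists T : transducer, forall u v, t u = Some v <-> taccepts T u v.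

Definition dom (t : seq Sigma -> option (seq Omega)) (x : seq Sigma) : Prop :=
  t x <> None.

Definition suffix_closed (X : seq Sigma -> Prop) : Prop :=
  forall u z, X (u ++ z) -> X z.

Fixpoint lcp_len {A : eqType} (x y : seq A) : nat :=
  match x, y with
  | a :: x', b :: y' => if a == b then (lcp_len x' y').+1 else 0
  | _, _ => 0
  end.
Definition lcs_len {A : eqType} (x y : seq A) : nat := lcp_len (rev x) (rev y).

Definition wdist {A : eqType} (x y : seq A) : nat :=
  size x + size y - 2 * lcs_len x y.

(** distance lifted to option values (only used on defined values) *)
Definition odist (x y : option (seq Omega)) : nat :=
  match x, y with Some a, Some b => wdist a b | _, _ => 0 end.

(** The right congruence R_t. Condition (ii): the set of distances is
    finite, i.e. (being a set of naturals) bounded. *)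
Definition Rt (t : seq Sigma -> option (seq Omega)) (u v : seq Sigma) : Prop :=
  (forall z, dom t (u ++ z) <-> dom t (v ++ z)) /\
  (exists N, forall w, dom t (u ++ w) -> dom t (v ++ w) ->
                       odist (t (u ++ w)) (t (v ++ w)) <= N).

Definition in_star2 (u v w : seq Sigma) : Prop :=
  exists s : seq bool, w = flatten [seq (if b then u else v) | b <- s].
Definition in_star2_le (n : nat) (u v w : seq Sigma) : Prop :=
  exists s : seq bool, size s <= n /\ w = flatten [seq (if b then u else v) | b <- s].

Definition critical_tuple (sim : seq Sigma -> seq Sigma -> Prop)
  (u2 v2 u v : seq Sigma) : Prop :=
  [/\ size u2 = size v2, 1 <= size u2,
      exists u1, u = u1 ++ u2,
      exists v1, v = v1 ++ v2
    & forall w, in_star2 u v w -> ~ sim (u2 ++ w) (v2 ++ w)].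

Definition linear_fooling_scheme (t : seq Sigma -> option (seq Omega))
  (u2 v2 u v : seq Sigma) (Z : seq Sigma -> Prop) : Prop :=
  [/\ exists u1, u = u1 ++ u2,
      exists v1, v = v1 ++ v2,
      size u2 = size v2,
      (forall w z, in_star2 u v w -> Z z ->
           dom t (u2 ++ w ++ z) /\ dom t (v2 ++ w ++ z))
    & exists C, forall n, exists z, [/\ Z z, size z <= C * n.+1 &
          forall w, in_star2_le n u v w -> t (u2 ++ w ++ z) <> t (v2 ++ w ++ z)]].

End Defs.

From mathcomp Require Import all_boot zify boolp.
Set Implicit Arguments. Unset Strict Implicit. Unset Printing Implicit Defensive.

(* Normalise the transducer so that every step reads at most one letter.
   Runs can then be shortened to outputs of linear length, and two runs on a
   common input zip into a path in the finite graph of pairs of configurations.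
   From the critical tuple, idempotent powers P = u^k and E = (P v)^m in the
   transition monoid make u2 E and v2 E agree on domains, so their output
   distance is unbounded; by pigeonhole it is already unbounded from one pair
   (c, d) of configurations reached after u2 E and v2 E.  A long enough pair
   path from (c, d) contains a loop that either unbalances the output lengths
   or is followed by diverging outputs, and pumping it yields continuations z
   of length O(k) at distance >= k.  Since every w in {P, E}^* still leads to
   (c, d) with outputs of length O(|w|), taking k linear in n separates
   t(u2 w E z) from t(v2 w E z) for all w in {P, E}^{<= n}. *)

Lemma size_flatten_nseq (T : Type) (s : seq T) m : size (flatten (nseq m s)) = m * size s.
Proof. by elim: m => //= m IH; rewrite size_cat IH mulSn. Qed.

Lemma flatten_nseqD (T : Type) (s : seq T) m n :
  flatten (nseq (m + n) s) = flatten (nseq m s) ++ flatten (nseq n s).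
Proof. by rewrite nseqD flatten_cat. Qed.

Lemma flatten_nseqSr (T : Type) (s : seq T) n : flatten (nseq n.+1 s) = flatten (nseq n s) ++ s.
Proof. by rewrite -addn1 flatten_nseqD /= cats0. Qed.

Section Words.
Variable A : eqType.
Implicit Types a b x y X Y : seq A.

Lemma catsI x : injective (cat x).
Proof. by move=> a b /(f_equal (drop (size x))); rewrite !drop_size_cat. Qed.

Lemma lcp_len_leql x y : lcp_len x y <= size x.
Proof. by elim: x y => [|c x IH] [|d y] //=; case: ifP => // _; exact: IH. Qed.

Lemma lcp_len_leqr x y : lcp_len x y <= size y.
Proof. by elim: x y => [|c x IH] [|d y] //=; case: ifP => // _; exact: IH. Qed.

Lemma lcp_len_sym x y : lcp_len x y = lcp_len y x.
Proof. by elim: x y => [|c x IH] [|d y] //=; rewrite eq_sym; case: ifP => _; rewrite ?IH. Qed.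

Lemma lcp_len_cat x y x' y' : lcp_len x y <= lcp_len (x ++ x') (y ++ y').
Proof. by elim: x y => [|c x IH] [|d y] //=; case: ifP => // _; exact: IH. Qed.

Lemma lcp_len_catE x y x' y' : lcp_len x y < size x -> lcp_len x y < size y ->
  lcp_len (x ++ x') (y ++ y') = lcp_len x y.
Proof. by elim: x y => [|c x IH] [|d y] //=; case: ifP => // _ ? ?; rewrite IH. Qed.

Lemma lcp_len_prefix x y : lcp_len x (x ++ y) = size x.
Proof. by elim: x => //= c x ->; rewrite eqxx. Qed.

Lemma lcs_len_leql x y : lcs_len x y <= size x.
Proof. by rewrite -(size_rev x) lcp_len_leql. Qed.

Lemma lcs_len_leqr x y : lcs_len x y <= size y.
Proof. by rewrite -(size_rev y) lcp_len_leqr. Qed.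

Lemma lcs_len_cat a b X Y : lcs_len a b <= lcs_len (X ++ a) (Y ++ b).
Proof. by rewrite /lcs_len !rev_cat lcp_len_cat. Qed.

Lemma lcs_len_suffix a b : lcs_len a (b ++ a) = size a.
Proof. by rewrite /lcs_len rev_cat lcp_len_prefix size_rev. Qed.

(* Neither word is a suffix of the other. *)
Definition suffix_conflict a b := (lcs_len a b < size a) && (lcs_len a b < size b).

Lemma lcs_len_catE a b X Y : suffix_conflict a b -> lcs_len (X ++ a) (Y ++ b) = lcs_len a b.
Proof. by case/andP => ? ?; rewrite /lcs_len !rev_cat lcp_len_catE ?size_rev. Qed.

Lemma suffix_conflict_cat a b X Y : suffix_conflict a b -> suffix_conflict (X ++ a) (Y ++ b).
Proof.
move=> ab; move: (ab); rewrite /suffix_conflict lcs_len_catE // !size_cat => /andP [? ?].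
apply/andP; lia.
Qed.

Lemma wdist_sym x y : wdist x y = wdist y x.
Proof. by rewrite /wdist /lcs_len lcp_len_sym addnC. Qed.

Lemma wdist_le_size x y : wdist x y <= size x + size y.
Proof. rewrite /wdist; lia. Qed.

Lemma wdist_sizel x y : size x <= wdist x y + size y.
Proof. rewrite /wdist; have := lcs_len_leql x y; have := lcs_len_leqr x y; lia. Qed.

Lemma wdist_sizer x y : size y <= wdist x y + size x.
Proof. by rewrite wdist_sym wdist_sizel. Qed.

Lemma wdist_cat a b X Y : wdist (X ++ a) (Y ++ b) <= size X + size Y + wdist a b.
Proof.
rewrite /wdist !size_cat; have := lcs_len_cat a b X Y.
have := lcs_len_leql a b; have := lcs_len_leqr a b; lia.
Qed.

Lemma wdist_conflict a b X Y : suffix_conflict a b ->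
  size X + size Y <= wdist (X ++ a) (Y ++ b).
Proof. by move=> ab; rewrite /wdist !size_cat lcs_len_catE //; case/andP: ab; lia. Qed.

Lemma wdist_no_conflict a b : ~~ suffix_conflict a b ->
  wdist a b <= (size a - size b) + (size b - size a).
Proof.
rewrite /suffix_conflict /wdist negb_and -!leqNgt => ab.
have := lcs_len_leql a b; have := lcs_len_leqr a b; case/orP: ab; lia.
Qed.

Lemma wdist_cat_eq a b X Y : X ++ a = Y ++ b -> wdist a b <= size X + size Y.
Proof.
wlog le_YX : a b X Y / size Y <= size X => [hwlog E|E].
  have [le|/ltnW le] := leqP (size Y) (size X); first exact: hwlog.
  by rewrite wdist_sym addnC; apply: hwlog.
have : Y ++ b = take (size Y) X ++ (drop (size Y) X ++ a) by rewrite catA cat_take_drop E.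
move/eqP; rewrite eqseq_cat ?size_takel // => /andP [_ /eqP Eb].
rewrite Eb /wdist lcs_len_suffix size_cat size_drop; lia.
Qed.

Lemma wdist_pump g1 g2 g3 h1 h2 h3 m :
  (size g2 != size h2) || (suffix_conflict g3 h3 && (0 < size g2 + size h2)) ->
  m <= wdist (g1 ++ flatten (nseq m g2) ++ g3) (h1 ++ flatten (nseq m h2) ++ h3)
       + (size g1 + size g3 + size h1 + size h3).
Proof.
case/orP => [ne|/andP [conf pos]].
  have := wdist_sizel (g1 ++ flatten (nseq m g2) ++ g3) (h1 ++ flatten (nseq m h2) ++ h3).
  have := wdist_sizer (g1 ++ flatten (nseq m g2) ++ g3) (h1 ++ flatten (nseq m h2) ++ h3).
  rewrite !size_cat !size_flatten_nseq.
  by case: (ltngtP (size g2) (size h2)) ne => // lt _; nia.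
have := wdist_conflict (g1 ++ flatten (nseq m g2)) (h1 ++ flatten (nseq m h2)) conf.
by rewrite -!catA !size_cat !size_flatten_nseq; nia.
Qed.

End Words.

Section Star.
Variable Sigma : finType.
Implicit Types u v w x y : seq Sigma.

Lemma in_star2_nil u v : in_star2 u v [::].
Proof. by exists [::]. Qed.

Lemma in_star2l u v : in_star2 u v u.
Proof. by exists [:: true]; rewrite /= cats0. Qed.

Lemma in_star2r u v : in_star2 u v v.
Proof. by exists [:: false]; rewrite /= cats0. Qed.

Lemma in_star2_cat u v x y : in_star2 u v x -> in_star2 u v y -> in_star2 u v (x ++ y).
Proof. by move=> [s ->] [s' ->]; exists (s ++ s'); rewrite map_cat flatten_cat. Qed.

Lemma in_star2_flatten_nseq u v x m : in_star2 u v x -> in_star2 u v (flatten (nseq m x)).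
Proof. by move=> x_uv; elim: m => /= [|m IH]; [apply: in_star2_nil | apply: in_star2_cat]. Qed.

Lemma in_star2_le_star n u v w : in_star2_le n u v w -> in_star2 u v w.
Proof. by move=> [s [_ ->]]; exists s. Qed.

Lemma size_in_star2_le n u v w : in_star2_le n u v w -> size w <= n * (size u + size v).
Proof.
move=> [s [le_s ->]]; apply: leq_trans (leq_mul le_s (leqnn _)).
by elim: s {le_s} => //= b s IH; rewrite size_cat mulSn; case: b; lia.
Qed.

End Star.

Lemma antitone_witness (U : finType) (P : nat -> U -> Prop) :
  (forall N N' x, N' <= N -> P N x -> P N' x) -> (forall N, exists x, P N x) ->
  exists x, forall N, P N x.
Proof.
move=> anti ex; apply: contrapT => /forallNP none.
have bad x : exists N, ~~ `[< P N x >].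
  by have /existsNP [N nP] := none x; exists N; apply/asboolPn.
have [x Px] := ex (\max_x xchoose (bad x)).
by have /asboolPn := xchooseP (bad x); apply; apply: anti Px; apply: leq_bigmax.
Qed.

(* The powers of an element of a finite monoid contain an idempotent. *)
Lemma idempotent_power (U : finType) (f : nat -> U) :
  (forall i j n, f i = f j -> f (i + n) = f (j + n)) -> exists2 k, 0 < k & f (k + k) = f k.
Proof.
move=> shift; pose g (i : 'I_#|U|.+1) := f i.
have /injectivePn [i [j ne_ij Eij]] : ~~ injectiveb g.
  by apply/negP => /injectiveP /leq_card; rewrite card_ord ltnn.
wlog lt_ij : i j ne_ij Eij / i < j.
  move=> hwlog; case: (ltngtP i j) => [|lt_ji|/val_inj eq_ij]; first exact: hwlog.
  - by apply: (hwlog j i); rewrite // eq_sym.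
  - by rewrite eq_ij eqxx in ne_ij.
pose p := j - i.
have periodic q n : f (i + n + q * p) = f (i + n).
  elim: q n => [|q IH] n; first by rewrite addn0.
  have -> : i + n + q.+1 * p = j + (n + q * p) by rewrite /p mulSn; lia.
  by rewrite -(shift i j) // addnA IH.
exists (p * i.+1); first by rewrite muln_gt0 subn_gt0 lt_ij.
have le_i : i <= p * i.+1 by rewrite /p; nia.
have := periodic i.+1 (p * i.+1 - i); rewrite addnBCA // subnn addn0 => <-.
by congr f; rewrite mulnC.
Qed.

Section LetterRuns.
Variables (Sigma Omega : finType) (T : transducer Sigma Omega).

Definition transition := seq_sub (ttrans T).
Definition tr_src (tr : transition) : tstate T := (ssval tr).1.1.1.
Definition tr_in (tr : transition) : seq Sigma := (ssval tr).1.1.2.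
Definition tr_out (tr : transition) : seq Omega := (ssval tr).1.2.
Definition tr_dst (tr : transition) : tstate T := (ssval tr).2.

Definition in_label_bound := (\max_(tr : transition) size (tr_in tr)).+1.
Definition out_label_bound := \max_(tr : transition) size (tr_out tr).

Lemma size_tr_in tr : size (tr_in tr) < in_label_bound.
Proof. by rewrite ltnS leq_bigmax. Qed.

Lemma size_tr_out tr : size (tr_out tr) <= out_label_bound.
Proof. exact: leq_bigmax. Qed.

(* A configuration is a state, or a transition of which the first [k] input
   letters have been read; its output is emitted on entering it. *)
Definition config : finType := (tstate T + (transition * 'I_in_label_bound))%type.

Inductive step : config -> seq Sigma -> seq Omega -> config -> Prop :=
| StepEnter tr : step (inl (tr_src tr)) [::] (tr_out tr) (inr (tr, ord0))
| StepRead tr (k : 'I_in_label_bound) a x : drop k (tr_in tr) = a :: x ->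
    step (inr (tr, k)) [:: a] [::] (inr (tr, inord k.+1))
| StepLeave tr (k : 'I_in_label_bound) : drop k (tr_in tr) = [::] ->
    step (inr (tr, k)) [::] [::] (inl (tr_dst tr)).

Inductive run : config -> seq Sigma -> seq Omega -> config -> Prop :=
| RunNil c : run c [::] [::] c
| RunCons c x1 o1 c1 x2 o2 c2 : step c x1 o1 c1 -> run c1 x2 o2 c2 ->
    run c (x1 ++ x2) (o1 ++ o2) c2.

Lemma run_step c x o c' : step c x o c' -> run c x o c'.
Proof. by move=> st; rewrite -(cats0 x) -(cats0 o); apply: RunCons st (RunNil _). Qed.

Lemma run_cat c x o c1 x' o' c2 : run c x o c1 -> run c1 x' o' c2 ->
  run c (x ++ x') (o ++ o') c2.
Proof.
elim=> // d x1 o1 d1 x2 o2 d2 st _ IH r; rewrite -!catA.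
exact: RunCons st (IH r).
Qed.

Lemma step_input c x o c' : step c x o c' -> x = [::] \/ exists2 a, x = [:: a] & o = [::].
Proof. by case; eauto. Qed.

Lemma step_output c x o c' : step c x o c' -> size o <= out_label_bound.
Proof. by case=> // tr; apply: size_tr_out. Qed.

Lemma run_consE c a x o c' : run c (a :: x) o c' ->
  exists c1 c2 o1 o2, [/\ o = o1 ++ o2, run c [::] o1 c1, step c1 [:: a] [::] c2
                        & run c2 x o2 c'].
Proof.
move E : (a :: x) => ax r; elim: r E => {c ax o c'} // c x1 o1 c1 x2 o2 c2 st r IH.
have [Ex|[b Ex Eo]] := step_input st; subst x1 => /= E; last subst o1.
  have [d1 [d2 [p1 [p2 [-> r1 st2 r2]]]]] := IH E.
  exists d1, d2, (o1 ++ p1), p2; split; rewrite ?catA //.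
  exact: RunCons st r1.
by case: E st => -> -> st; exists c, c1, [::], o2; split => //; apply: RunNil.
Qed.

Lemma run_catE c x y o c' : run c (x ++ y) o c' ->
  exists c1 o1 o2, [/\ o = o1 ++ o2, run c x o1 c1 & run c1 y o2 c'].
Proof.
elim: x c o => [|a x IH] c o /=; first by exists c, [::], o; split => //; apply: RunNil.
move=> /run_consE [c1 [c2 [o1 [o2 [-> r1 st /IH [c3 [o3 [o4 [-> r2 r3]]]]]]]]].
exists c3, (o1 ++ o3), o4; split; rewrite ?catA //.
by rewrite -cat1s -[o1]cats0 -catA; apply: run_cat r1 (RunCons st r2).
Qed.

Lemma run_read_label tr k : k <= size (tr_in tr) ->
  run (inr (tr, inord k)) (drop k (tr_in tr)) [::] (inl (tr_dst tr)).
Proof.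
have bound := size_tr_in tr.
move: {2}(size (tr_in tr) - k) (erefl (size (tr_in tr) - k)) => n.
elim: n k => [|n IH] k En le_k.
  have -> : k = size (tr_in tr) by lia.
  by rewrite drop_size; apply/run_step/StepLeave; rewrite inordK ?drop_size //; lia.
case Ed : (drop k (tr_in tr)) => [|a x].
  by move/(f_equal size): Ed; rewrite size_drop /=; lia.
have Ex : x = drop k.+1 (tr_in tr) by rewrite -addn1 addnC -drop_drop Ed drop1.
have st : step (inr (tr, inord k)) [:: a] [::] (inr (tr, inord k.+1)).
  have := @StepRead tr (inord k) a x; rewrite inordK ?Ed; first by apply.
  exact: leq_ltn_trans le_k bound.
have rd : run (inr (tr, inord k.+1)) x [::] (inl (tr_dst tr)) by rewrite Ex; apply: IH; lia.
exact: RunCons st rd.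
Qed.

Lemma run_of_trun p x o q : trun p x o q -> run (inl p) x o (inl q).
Proof.
elim=> {p x o q} [p|p a b r u v q tr_in_T _ IH]; first exact: RunNil.
pose tr : transition := SeqSub tr_in_T.
have := @run_read_label tr 0 (leq0n _); rewrite drop0.
have -> : inord 0 = ord0 :> 'I_in_label_bound by apply: val_inj; rewrite /= inordK.
by move=> rd; apply: RunCons (StepEnter tr) (run_cat rd IH).
Qed.

Lemma trun_of_run_gen c x o q : run c x o (inl q) ->
  match c with
  | inl p => trun p x o q
  | inr (tr, k) => exists2 x', x = drop k (tr_in tr) ++ x' & trun (tr_dst tr) x' o q
  end.
Proof.
move E : (inl q) => cq r; elim: r E => {c x o cq} [c <-|c x1 o1 c1 x2 o2 c2 st _ IH E].
  exact: trun_nil.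
case: st IH => [tr|tr k a x Ed|tr k Ed] /(_ E).
- rewrite drop0 => -[x' -> run_x'].
  case: tr run_x' => [[[[p a] b] r] /= tr_in_T] run_x'.
  exact: trun_step tr_in_T run_x'.
- have lt_k : k < size (tr_in tr) by move/(f_equal size): Ed; rewrite size_drop /=; lia.
  rewrite inordK; last exact: leq_ltn_trans lt_k (size_tr_in tr).
  move=> [x' -> run_x']; exists x' => //.
  by rewrite -addn1 addnC -drop_drop Ed drop1.
- by move=> run_x2; exists x2; rewrite ?Ed.
Qed.

Lemma trun_of_run p x o q : run (inl p) x o (inl q) -> trun p x o q.
Proof. exact: trun_of_run_gen. Qed.

Definition eps_closure_step (c : config) (S : {set config}) : {set config} :=
  c |: [set c' | `[< exists c1 o, c1 \in S /\ step c1 [::] o c' >]].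

Lemma eps_closure_step_mono c : {homo eps_closure_step c : S S' / S \subset S'}.
Proof.
move=> S S' sub; apply/subsetP => c'; rewrite !inE => /orP [->//|/asboolP [c1 [o [S_c1 st]]]].
by apply/orP; right; apply/asboolP; exists c1, o; split => //; apply: (subsetP sub).
Qed.

Lemma eps_closure_iter c k c' : c' \in iter k (eps_closure_step c) set0 ->
  exists o, run c [::] o c' /\ size o <= k * out_label_bound.
Proof.
elim: k c' => [|k IH] c' /=; first by rewrite inE.
rewrite !inE => /orP [/eqP ->|/asboolP [c1 [o [/IH [o1 [r1 le_o1]] st]]]].
  by exists [::]; split => //; apply: RunNil.
exists (o1 ++ o); split; first exact: run_cat r1 (run_step st).
by rewrite size_cat mulSn; have := step_output st; lia.
Qed.

Lemma eps_closure_run c c1 o c' : c1 \in fixset (eps_closure_step c) ->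
  run c1 [::] o c' -> c' \in fixset (eps_closure_step c).
Proof.
move=> fix_c1; move E : [::] => x r.
elim: r fix_c1 E => {c1 x o c'} // c1 x1 o1 c2 x2 o2 c3 st _ IH fix_c1.
case: x1 st => // st /= E; apply: IH E.
rewrite -(fixsetK (@eps_closure_step_mono c)) !inE; apply/orP; right.
by apply/asboolP; exists c1, o1.
Qed.

Definition out_bound := #|config| * out_label_bound.

Lemma eps_run_short c o c' : run c [::] o c' ->
  exists o', run c [::] o' c' /\ size o' <= out_bound.
Proof.
move=> r; apply: eps_closure_iter; apply: eps_closure_run r.
by rewrite -(fixsetK (@eps_closure_step_mono c)) setU11.
Qed.

Lemma run_consE_short c a x o c' : run c (a :: x) o c' ->
  exists c1 o1 o2, [/\ run c [:: a] o1 c1, size o1 <= out_bound & run c1 x o2 c'].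
Proof.
move=> /run_consE [c1 [c2 [o1 [o2 [_ /eps_run_short [o1' [r1 le_o1]] st r2]]]]].
exists c2, o1', o2; split => //.
by rewrite -[o1']cats0 -[[:: a]]cat0s; apply: run_cat r1 (run_step st).
Qed.

Lemma run_short c x o c' : run c x o c' ->
  exists o', run c x o' c' /\ size o' <= out_bound * (size x).+1.
Proof.
elim: x c o => [|a x IH] c o.
  by move=> /eps_run_short [o' [r le_o']]; exists o'; rewrite muln1.
move=> /run_consE_short [c1 [o1 [o2 [r1 le_o1 /IH [o2' [r2 le_o2]]]]]].
exists (o1 ++ o2'); split; first exact: run_cat r1 r2.
by rewrite size_cat /= mulnS; lia.
Qed.

End LetterRuns.

Section Loops.
Variables (X : Type) (V : finType) (next : X -> V).

Definition path_end (v : V) (l : seq X) := last v (map next l).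

Lemma path_end_cat v l1 l2 : path_end v (l1 ++ l2) = path_end (path_end v l1) l2.
Proof. by rewrite /path_end map_cat last_cat. Qed.

Definition all_loops v l (Q : seq X -> seq X -> Prop) :=
  forall l1 l2 l3, l = l1 ++ l2 ++ l3 -> path_end v l1 = path_end v (l1 ++ l2) -> Q l2 l3.

Lemma all_loops_catl v l l' Q : all_loops v (l ++ l') Q ->
  all_loops v l (fun l2 l3 => Q l2 (l3 ++ l')).
Proof. by move=> loops l1 l2 l3 E; apply: loops; rewrite E -!catA. Qed.

Lemma all_loops_catr v l l' Q : all_loops v (l ++ l') Q -> all_loops (path_end v l) l' Q.
Proof.
move=> loops l1 l2 l3 E end_eq; apply: (loops (l ++ l1)); first by rewrite E -!catA.
by rewrite -catA !(path_end_cat v l).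
Qed.

Lemma split_last_visit v l :
  exists l1 l2, [/\ l = l1 ++ l2, path_end v l1 = v & v \notin map next l2].
Proof.
elim/last_ind: l => [|l x [l1 [l2 [-> end_l1 notin]]]]; first by exists [::], [::].
have [<-|ne] := eqVneq (next x) v.
  by exists (rcons (l1 ++ l2) x), [::]; rewrite cats0 /path_end map_rcons last_rcons.
exists l1, (rcons l2 x); rewrite rcons_cat map_rcons mem_rcons in_cons eq_sym.
by rewrite (negPf ne).
Qed.

(* By induction on [S]: after its last visit to [v], the path stays in [S :\ v]. *)
Lemma sum_le_loops (f1 f2 : X -> nat) D (S : {set V}) v l :
  v \in S -> {subset map next l <= S} -> all (fun x => f1 x <= D) l ->
  all_loops v l (fun l2 _ => sumn (map f1 l2) <= sumn (map f2 l2)) ->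
  sumn (map f1 l) <= sumn (map f2 l) + D * #|S|.
Proof.
have [n] := ubnP #|S|; elim: n S v l => // n IH S v l lt_S Sv.
have [l1 [l2 [-> end_l1 notin]]] := split_last_visit v l.
rewrite all_cat !map_cat !sumn_cat => inS /andP [_ leD] loops.
have le1 : sumn (map f1 l1) <= sumn (map f2 l1) by apply: (loops [::] l1 l2); rewrite ?end_l1.
case: l2 notin inS leD loops => [|x l2]; first by rewrite /=; lia.
rewrite /= in_cons negb_or => /andP [ne notin] inS /andP [le_x leD] loops.
have le2 : sumn (map f1 l2) <= sumn (map f2 l2) + D * #|S :\ v|.
  apply: (IH _ (next x)) => //.
  - by move: lt_S; rewrite (cardsD1 v S) Sv; lia.
  - by rewrite in_setD1 eq_sym ne inS // mem_cat mem_head orbT.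
  - move=> y l2y; rewrite in_setD1 inS ?mem_cat ?in_cons ?l2y ?orbT // andbT.
    by apply: contraNneq notin => <-.
  - by have := all_loops_catr (l := [:: x]) (all_loops_catr loops); rewrite end_l1.
rewrite (cardsD1 v S) Sv /=; lia.
Qed.

Variables (A : eqType) (out1 out2 : X -> seq A) (M : nat).

Definition output1 l := flatten (map out1 l).
Definition output2 l := flatten (map out2 l).

Lemma output1_cat l l' : output1 (l ++ l') = output1 l ++ output1 l'.
Proof. by rewrite /output1 map_cat flatten_cat. Qed.

Lemma output2_cat l l' : output2 (l ++ l') = output2 l ++ output2 l'.
Proof. by rewrite /output2 map_cat flatten_cat. Qed.

Lemma output1_flatten_nseq m l : output1 (flatten (nseq m l)) = flatten (nseq m (output1 l)).
Proof. by elim: m => //= m IH; rewrite output1_cat IH. Qed.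

Lemma output2_flatten_nseq m l : output2 (flatten (nseq m l)) = flatten (nseq m (output2 l)).
Proof. by elim: m => //= m IH; rewrite output2_cat IH. Qed.

Lemma size_output1 l : size (output1 l) = sumn (map (fun x => size (out1 x)) l).
Proof. by rewrite size_flatten /shape -map_comp. Qed.

Lemma size_output2 l : size (output2 l) = sumn (map (fun x => size (out2 x)) l).
Proof. by rewrite size_flatten /shape -map_comp. Qed.

Definition bounded_steps l := all (fun x => (size (out1 x) <= M) && (size (out2 x) <= M)) l.

(* Iterating such a loop makes the distance between the two outputs grow. *)
Definition pumpable_loop l2 (g3 h3 : seq A) :=
  (size (output1 l2) != size (output2 l2)) ||
  (suffix_conflict g3 h3 && (0 < size (output1 l2) + size (output2 l2))).

Lemma wdist_le_silent_loops v l g h : bounded_steps l ->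
  all_loops v l (fun l2 _ => size (output1 l2) + size (output2 l2) = 0) ->
  wdist (output1 l ++ g) (output2 l ++ h) <= 2 * M * #|V| + wdist g h.
Proof.
pose f x := size (out1 x) + size (out2 x).
have sizes l' : size (output1 l') + size (output2 l') = sumn (map f l').
  by rewrite size_output1 size_output2; elim: l' => //= x l' <-; rewrite /f; lia.
have sum0 l' : sumn (map (fun=> 0) l') = 0 by elim: l'.
move=> bl loops.
have bf : all (fun x => f x <= 2 * M) l by apply: sub_all bl => x /andP [? ?]; rewrite /f; lia.
have loops' : all_loops v l (fun l2 _ => sumn (map f l2) <= sumn (map (fun=> 0) l2)).
  by move=> l1 l2 l3 E /(loops _ _ _ E); rewrite -sizes sum0 => ->.
have := sum_le_loops (in_setT v) (fun y _ => in_setT y) bf loops'.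
rewrite -sizes sum0 cardsT; have := wdist_cat g h (output1 l) (output2 l); lia.
Qed.

Lemma wdist_le_balanced_loops v l g h : bounded_steps l -> size g <= M -> size h <= M ->
  all_loops v l (fun l2 _ => size (output1 l2) = size (output2 l2)) ->
  ~~ suffix_conflict (output1 l ++ g) (output2 l ++ h) ->
  wdist (output1 l ++ g) (output2 l ++ h) <= M * #|V| + M.
Proof.
move=> bl bg bh loops /wdist_no_conflict; rewrite !size_cat.
have b1 : all (fun x => size (out1 x) <= M) l by apply: sub_all bl => x /andP [].
have b2 : all (fun x => size (out2 x) <= M) l by apply: sub_all bl => x /andP [].
have le12 : size (output1 l) <= size (output2 l) + M * #|V|.
  rewrite size_output1 size_output2 -cardsT.
  apply: sum_le_loops (in_setT v) (fun y _ => in_setT y) b1 _.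
  by move=> l1 l2 l3 E /(loops _ _ _ E); rewrite size_output1 size_output2 => ->.
have le21 : size (output2 l) <= size (output1 l) + M * #|V|.
  rewrite size_output1 size_output2 -cardsT.
  apply: sum_le_loops (in_setT v) (fun y _ => in_setT y) b2 _.
  by move=> l1 l2 l3 E /(loops _ _ _ E); rewrite size_output1 size_output2 => ->.
lia.
Qed.

Lemma suffix_threshold (P : pred (seq X)) l :
  P [::] \/ ~~ P l \/ exists lp x r, [/\ l = lp ++ x :: r, P (x :: r) & ~~ P r].
Proof.
elim: l => [|x l IH]; first by case: (boolP (P [::])); auto.
case: (boolP (P (x :: l))) => [Pxl|]; last by auto.
case: IH => [|[nPl|[lp [y [r [-> Pyr nPr]]]]]]; first by auto.
  by right; right; exists [::], x, l.
by right; right; exists (x :: lp), y, r.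
Qed.

Lemma wdist_le_no_pumpable_loop v l gf hf : bounded_steps l -> size gf <= M -> size hf <= M ->
  all_loops v l (fun l2 l3 => ~~ pumpable_loop l2 (output1 l3 ++ gf) (output2 l3 ++ hf)) ->
  wdist (output1 l ++ gf) (output2 l ++ hf) <= 3 * M * #|V|.+1.
Proof.
move=> bl bg bh loops.
pose Q l2 l3 := ~~ pumpable_loop l2 (output1 l3 ++ gf) (output2 l3 ++ hf).
pose P r := suffix_conflict (output1 r ++ gf) (output2 r ++ hf).
have P_cat r r' : P r' -> P (r ++ r').
  by rewrite /P output1_cat output2_cat -!catA; apply: suffix_conflict_cat.
have balanced v' l' : all_loops v' l' Q ->
    all_loops v' l' (fun l2 _ => size (output1 l2) = size (output2 l2)).
  by move=> lp l1 l2 l3 E /(lp _ _ _ E); rewrite /Q negb_or negbK => /andP [/eqP].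
have silent v' l' r : P r -> all_loops v' l' (fun l2 l3 => Q l2 (l3 ++ r)) ->
    all_loops v' l' (fun l2 _ => size (output1 l2) + size (output2 l2) = 0).
  move=> Pr lp l1 l2 l3 E /(lp _ _ _ E); rewrite /Q negb_or negbK => /andP [_].
  by have := P_cat l3 r Pr; rewrite /P => ->; rewrite /= -leqNgt leqn0 => /eqP.
have bwdist (g h : seq A) : size g <= M -> size h <= M -> wdist g h <= 2 * M.
  by move=> ? ?; have := wdist_le_size g h; lia.
case: (suffix_threshold P l) => [P0|[nPl|[lp [x [r [El Pxr nPr]]]]]].
- have loops0 : all_loops v (l ++ [::]) Q by rewrite cats0.
  have := wdist_le_silent_loops gf hf bl (silent v l [::] P0 (all_loops_catl loops0)).
  have := bwdist gf hf bg bh; rewrite mulnS; lia.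
- have := wdist_le_balanced_loops bl bg bh (balanced v l loops) nPl; rewrite mulnS; lia.
- move: bl loops; rewrite El /bounded_steps all_cat /= => /and3P [blp /andP [b1 b2] blr] loops.
  have loops' : all_loops v ((lp ++ [:: x]) ++ r) Q by rewrite -catA.
  have wr := wdist_le_balanced_loops blr bg bh (balanced _ _ (all_loops_catr loops')) nPr.
  have wlp := wdist_le_silent_loops (out1 x ++ output1 r ++ gf) (out2 x ++ output2 r ++ hf) blp
                (silent v lp (x :: r) Pxr (all_loops_catl loops)).
  have wx := wdist_cat (output1 r ++ gf) (output2 r ++ hf) (out1 x) (out2 x).
  rewrite output1_cat output2_cat -[output1 (x :: r)]/(out1 x ++ output1 r).
  rewrite -[output2 (x :: r)]/(out2 x ++ output2 r) -!catA.
  by set n := #|V| in wr wlp *; lia.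
Qed.

Lemma pumpable_loop_of_wdist v l gf hf : bounded_steps l -> size gf <= M -> size hf <= M ->
  3 * M * #|V|.+1 < wdist (output1 l ++ gf) (output2 l ++ hf) ->
  exists l1 l2 l3, [/\ l = l1 ++ l2 ++ l3, path_end v l1 = path_end v (l1 ++ l2)
                     & pumpable_loop l2 (output1 l3 ++ gf) (output2 l3 ++ hf)].
Proof.
move=> bl bg bh; rewrite ltnNge => /negP; apply: contra_notP => noloop.
apply: (wdist_le_no_pumpable_loop (v := v)) => // l1 l2 l3 E e; apply/negP => pump.
by apply: noloop; exists l1, l2, l3; split.
Qed.

End Loops.

Section Pumping.
Variables (Sigma Omega : finType) (T : transducer Sigma Omega).

Record pair_step := PairStep {
  ps_letter : Sigma;
  ps_out1 : seq Omega;
  ps_out2 : seq Omega;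
  ps_next : config T * config T }.

Definition pair_edge (v : config T * config T) (s : pair_step) :=
  run v.1 [:: ps_letter s] (ps_out1 s) (ps_next s).1 /\
  run v.2 [:: ps_letter s] (ps_out2 s) (ps_next s).2.

Fixpoint pair_path v l : Prop :=
  if l is s :: l' then pair_edge v s /\ pair_path (ps_next s) l' else True.

Local Notation path_end := (path_end ps_next).
Local Notation output1 := (output1 ps_out1).
Local Notation output2 := (output2 ps_out2).

Lemma pair_path_cat v l1 l2 :
  pair_path v (l1 ++ l2) <-> pair_path v l1 /\ pair_path (path_end v l1) l2.
Proof. by elim: l1 v => [|s l1 IH] v /=; [tauto | rewrite IH; tauto]. Qed.

Lemma pair_path_runs v l : pair_path v l ->
  run v.1 (map ps_letter l) (output1 l) (path_end v l).1 /\
  run v.2 (map ps_letter l) (output2 l) (path_end v l).2.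
Proof.
elim: l v => [|s l IH] v /=; first by split; apply: RunNil.
by case=> [[r1 r2] /IH [r1' r2']]; split; [exact: run_cat r1 r1' | exact: run_cat r2 r2'].
Qed.

Lemma pair_path_pump v l1 l2 l3 m : pair_path v (l1 ++ l2 ++ l3) ->
  path_end v l1 = path_end v (l1 ++ l2) ->
  pair_path v (l1 ++ flatten (nseq m l2) ++ l3) /\
  path_end v (l1 ++ flatten (nseq m l2) ++ l3) = path_end v (l1 ++ l2 ++ l3).
Proof.
rewrite !path_end_cat; set w := path_end v l1 => + loop.
move=> /pair_path_cat [p1 /pair_path_cat [p2 p3]].
have [pm end_m] : pair_path w (flatten (nseq m l2)) /\ path_end w (flatten (nseq m l2)) = w.
  elim: m => [|m [IH1 IH2]] //=.
  by rewrite pair_path_cat path_end_cat -loop IH2.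
rewrite -loop in p3; rewrite end_m -loop; split => //.
by apply/pair_path_cat; split => //; apply/pair_path_cat; rewrite end_m.
Qed.

Lemma pair_path_of_runs z c d g h e e' : run c z g e -> run d z h e' ->
  exists l gf hf, [/\ pair_path (c, d) l, map ps_letter l = z,
    bounded_steps ps_out1 ps_out2 (out_bound T) l,
    run (path_end (c, d) l).1 [::] gf e /\ run (path_end (c, d) l).2 [::] hf e'
  & size gf <= out_bound T /\ size hf <= out_bound T].
Proof.
elim: z c d g h => [|a z IH] c d g h.
  by move=> /eps_run_short [gf [rg bg]] /eps_run_short [hf [rh bh]]; exists [::], gf, hf.
move=> /run_consE_short [c1 [g1 [g2 [r1 b1 /IH rc]]]].
move=> /run_consE_short [d1 [h1 [h2 [s1 b2 /rc [l [gf [hf [p El bl tails bts]]]]]]]].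
exists (PairStep a g1 h1 (c1, d1) :: l), gf, hf.
by split => //=; [rewrite El | rewrite b1 b2].
Qed.

Variable final : config T -> Prop.

Definition functional_from c := forall z g g' e e',
  final e -> final e' -> run c z g e -> run c z g' e' -> g = g'.

Definition diverging c d := forall N, exists z g h e e',
  [/\ final e, final e', run c z g e, run d z h e' & N < wdist g h].

Lemma diverging_linear c d : functional_from c -> functional_from d -> diverging c d ->
  exists K, forall k, exists z g h e e', [/\ final e, final e', run c z g e, run d z h e'
    & size z <= K * k.+1 /\ k <= wdist g h].
Proof.
move=> fun_c fun_d div.
have [z [g [h [e [e' [fe fe' rg rh big]]]]]] :=
  div (3 * out_bound T * #|{: config T * config T}|.+1).
have [l [gf [hf [p El bl [tg th] [bg bh]]]]] := pair_path_of_runs rg rh.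
have [pg ph] := pair_path_runs p.
have Eg : output1 l ++ gf = g.
  by apply: (fun_c z _ _ _ _ fe fe _ rg); rewrite -El -[map _ l]cats0; apply: run_cat pg tg.
have Eh : output2 l ++ hf = h.
  by apply: (fun_d z _ _ _ _ fe' fe' _ rh); rewrite -El -[map _ l]cats0; apply: run_cat ph th.
rewrite -Eg -Eh in big.
have [l1 [l2 [l3 [El' loop pump]]]] := pumpable_loop_of_wdist ps_next (c, d) bl bg bh big.
pose c0 := size (output1 l1) + size (output1 l3 ++ gf) +
           size (output2 l1) + size (output2 l3 ++ hf).
exists (c0.+1 * size l) => k.
pose m := k + c0; pose lm := l1 ++ flatten (nseq m l2) ++ l3.
rewrite El' in p; have [pm end_m] := pair_path_pump m p loop.
have [rm1 rm2] := pair_path_runs pm; rewrite end_m -El' in rm1 rm2.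
exists (map ps_letter lm), (output1 lm ++ gf), (output2 lm ++ hf), e, e'; split => //.
- by rewrite -[map _ lm]cats0; apply: run_cat rm1 tg.
- by rewrite -[map _ lm]cats0; apply: run_cat rm2 th.
split.
  rewrite size_map /lm El' !size_cat size_flatten_nseq /m; nia.
rewrite -(leq_add2r c0); apply: leq_trans (wdist_pump (output1 l1) (output2 l1) m pump) _.
by rewrite /lm !output1_cat !output2_cat output1_flatten_nseq output2_flatten_nseq -!catA.
Qed.

End Pumping.

Section RationalFunction.
Variables (Sigma Omega : finType) (T : transducer Sigma Omega).
Variable t : seq Sigma -> option (seq Omega).
Hypothesis t_T : forall u v, t u = Some v <-> taccepts T u v.

Definition initial (c : config T) := exists2 p, c = inl p & tinit p.
Definition final (c : config T) := exists2 q, c = inl q & tfin q.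

Lemma t_runP x o : t x = Some o <-> exists c0 e, [/\ initial c0, final e & run c0 x o e].
Proof.
rewrite t_T; split => [[p [q [ip fq r]]]|[_ [_ [[p -> ip] [q -> fq] /trun_of_run r]]]].
  by exists (inl p), (inl q); split; [exists p | exists q | apply: run_of_trun].
by exists p, q.
Qed.

Lemma dom_runP x : dom t x <-> exists o c0 e, [/\ initial c0, final e & run c0 x o e].
Proof.
split; first by case E : (t x) => [o|//] _; exists o; apply/t_runP.
by move=> [o /t_runP E]; rewrite /dom E.
Qed.

Lemma accepted_catE x y o : t (x ++ y) = Some o ->
  exists c0 c a g e, [/\ initial c0, run c0 x a c, size a <= out_bound T * (size x).+1,
                         final e /\ run c y g e & o = a ++ g].
Proof.
move=> txy; have [c0 [e [ic fe /run_catE [c [o1 [g [_ r1 r2]]]]]]] := (t_runP _ _).1 txy.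
have [a [ra le_a]] := run_short r1; exists c0, c, a, g, e; split => //.
have : t (x ++ y) = Some (a ++ g) by apply/t_runP; exists c0, e; split => //; apply: run_cat ra r2.
by rewrite txy => -[].
Qed.

Definition reachable x c := exists2 c0, initial c0 & exists o, run c0 x o c.

Lemma reachable_functional x c : reachable x c -> functional_from final c.
Proof.
move=> [c0 ic [a ra]] z g g' e e' fe fe' rg rg'.
have tg : t (x ++ z) = Some (a ++ g).
  by apply/t_runP; exists c0, e; split => //; apply: run_cat ra rg.
have : t (x ++ z) = Some (a ++ g').
  by apply/t_runP; exists c0, e'; split => //; apply: run_cat ra rg'.
by rewrite tg => -[/catsI].
Qed.

Definition trans_rel x : {set config T * config T} := [set cc | `[< exists o, run cc.1 x o cc.2 >]].

Definition rel_comp (R S : {set config T * config T}) : {set config T * config T} :=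
  [set cc | [exists c, ((cc.1, c) \in R) && ((c, cc.2) \in S)]].

Lemma trans_relP x c c' : reflect (exists o, run c x o c') ((c, c') \in trans_rel x).
Proof. by rewrite inE; apply: asboolP. Qed.

Lemma trans_rel_cat x y : trans_rel (x ++ y) = rel_comp (trans_rel x) (trans_rel y).
Proof.
apply/setP => -[c c']; rewrite [in RHS]inE /=; apply/trans_relP/existsP.
  move=> [o /run_catE [c1 [o1 [o2 [_ r1 r2]]]]].
  by exists c1; apply/andP; split; apply/trans_relP; eauto.
move=> [c1 /andP [/trans_relP [o1 r1] /trans_relP [o2 r2]]].
by exists (o1 ++ o2); apply: run_cat r1 r2.
Qed.

Lemma reachable_trans_rel x x' c : trans_rel x = trans_rel x' -> reachable x c -> reachable x' c.
Proof.
move=> E [c0 ic [o r]]; exists c0 => //.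
by apply/trans_relP; rewrite -E; apply/trans_relP; exists o.
Qed.

Lemma dom_trans_rel x x' y z : trans_rel x = trans_rel x' ->
  dom t (y ++ x ++ z) -> dom t (y ++ x' ++ z).
Proof.
move=> E /dom_runP [o [c0 [e [ic fe r]]]]; apply/dom_runP.
have /trans_relP [o' r'] : (c0, e) \in trans_rel (y ++ x' ++ z).
  by rewrite !trans_rel_cat -E -!trans_rel_cat; apply/trans_relP; exists o.
by exists o', c0, e.
Qed.

Section FoolingScheme.
Hypothesis suffix_dom : suffix_closed (dom t).
Variables (u2 v2 P E : seq Sigma).
Hypotheses (u2_suffix : exists P1, P = P1 ++ u2) (v2_suffix : exists E1, E = E1 ++ v2).
Hypothesis size_u2v2 : size u2 = size v2.
Hypotheses (rel_PE : trans_rel (P ++ E) = trans_rel E) (rel_EE : trans_rel (E ++ E) = trans_rel E).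
Hypothesis not_Rt : ~ Rt t (u2 ++ E) (v2 ++ E).

Lemma trans_rel_star_cat w : in_star2 P E w -> trans_rel (w ++ E) = trans_rel E.
Proof.
by move=> [s ->]; elim: s => //= b s IH; rewrite -catA trans_rel_cat IH -trans_rel_cat; case: b.
Qed.

Lemma dom_u2E_v2E z : dom t (u2 ++ E ++ z) <-> dom t (v2 ++ E ++ z).
Proof.
have [P1 EP] := u2_suffix; have [E1 EE] := v2_suffix.
split => [/(dom_trans_rel (esym rel_EE))|/(dom_trans_rel (esym rel_PE))].
  by rewrite {1}EE -!catA catA => /suffix_dom.
by rewrite {1}EP -!catA catA => /suffix_dom.
Qed.

Lemma unbounded_u2E_v2E N : exists w, [/\ dom t (u2 ++ E ++ w), dom t (v2 ++ E ++ w)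
  & N < odist (t (u2 ++ E ++ w)) (t (v2 ++ E ++ w))].
Proof.
apply: contrapT => noW; apply: not_Rt; split => [z|]; first by rewrite -!catA dom_u2E_v2E.
exists N => w; rewrite -!catA => d1 d2; rewrite leqNgt; apply/negP => lt.
by apply: noW; exists w.
Qed.

Lemma diverging_configs : exists c d,
  [/\ reachable (u2 ++ E) c, reachable (v2 ++ E) d & diverging final c d].
Proof.
pose B := out_bound T * (size (u2 ++ E)).+1.
pose Q N (cd : config T * config T) := [/\ reachable (u2 ++ E) cd.1, reachable (v2 ++ E) cd.2
  & exists z g h e e', [/\ final e, final e', run cd.1 z g e, run cd.2 z h e' & N < wdist g h]].
have [[c d] Qcd] : exists cd, forall N, Q N cd.
  apply: antitone_witness => [N N' cd le [rc rd [z [g [h [e [e' [? ? ? ? lt]]]]]]]|N].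
    by split => //; exists z, g, h, e, e'; split => //; apply: leq_ltn_trans lt.
  have [w [d1 d2 lt]] := unbounded_u2E_v2E (N + B + B).
  case E1 : (t (u2 ++ E ++ w)) d1 lt => [o1|//] _.
  case E2 : (t (v2 ++ E ++ w)) d2 => [o2|//] _ /= lt.
  rewrite catA in E1; rewrite catA in E2.
  have [c0 [c [a [g [e [ic ra la [fe rg] Eo1]]]]]] := accepted_catE E1.
  have [d0 [d [b [h [e' [id rb lb [fe' rh] Eo2]]]]]] := accepted_catE E2.
  exists (c, d); split; [by exists c0; eauto | by exists d0; eauto|].
  exists w, g, h, e, e'; split => //.
  rewrite -/B in la; rewrite !size_cat -size_u2v2 -size_cat -/B in lb.
  rewrite Eo1 Eo2 in lt.
  have := leq_trans lt (leq_trans (wdist_cat g h a b) (leq_add (leq_add la lb) (leqnn _))).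
  lia.
by exists c, d; have [rc rd _] := Qcd 0; split => // N; have [_ _] := Qcd N.
Qed.

Lemma t_star_continuation y w c z g e : in_star2 P E w -> reachable (y ++ E) c ->
  final e -> run c z g e ->
  exists2 a, size a <= out_bound T * (size (y ++ w ++ E)).+1 & t (y ++ w ++ E ++ z) = Some (a ++ g).
Proof.
move=> wPE rc fe rg; have : reachable (y ++ w ++ E) c.
  by apply: reachable_trans_rel rc; rewrite trans_rel_cat [in RHS]trans_rel_cat trans_rel_star_cat.
move=> [c0 ic [o /run_short [a [ra le_a]]]]; exists a => //.
by apply/t_runP; exists c0, e; split => //; have := run_cat ra rg; rewrite -!catA.
Qed.

Lemma t_neq_of_wdist c d w z g h e e' : in_star2 P E w ->
  reachable (u2 ++ E) c -> reachable (v2 ++ E) d -> final e -> final e' ->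
  run c z g e -> run d z h e' -> 2 * out_bound T * (size (u2 ++ w ++ E)).+1 < wdist g h ->
  t (u2 ++ w ++ E ++ z) <> t (v2 ++ w ++ E ++ z).
Proof.
move=> wPE rc rd fe fe' rg rh big.
have [a la ->] := t_star_continuation wPE rc fe rg.
have [b lb ->] := t_star_continuation wPE rd fe' rh.
rewrite !size_cat -size_u2v2 -!size_cat in lb.
move=> [/wdist_cat_eq le_gh]; have := leq_trans big (leq_trans le_gh (leq_add la lb)); lia.
Qed.

Lemma fooling_scheme : exists Z, linear_fooling_scheme t u2 v2 P E Z.
Proof.
have [c [d [rc rd div]]] := diverging_configs.
have [K lin] := diverging_linear (reachable_functional rc) (reachable_functional rd) div.
pose Z z := exists2 z', z = E ++ z' &
  (exists g e, final e /\ run c z' g e) /\ (exists h e', final e' /\ run d z' h e').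
exists Z; split => //.
  move=> w _ wPE [z' -> [[g [e [fe rg]]] [h [e' [fe' rh]]]]].
  have [a _ ta] := t_star_continuation wPE rc fe rg.
  by have [b _ tb] := t_star_continuation wPE rd fe' rh; rewrite /dom ta tb.
pose S := (size u2 + size P + size E + size E).+1.
exists (size E + K * (2 * out_bound T * S).+2) => n.
pose k := (2 * out_bound T * (size u2 + n * (size P + size E) + size E).+1).+1.
have [z' [g [h [e [e' [fe fe' rg rh [lz lk]]]]]]] := lin k.
exists (E ++ z'); split.
- by exists z' => //; split; [exists g, e | exists h, e'].
- have hk : k.+1 <= n.+1 * (2 * out_bound T * S).+2 by rewrite /k /S; nia.
  by rewrite size_cat; have := leq_trans lz (leq_mul (leqnn K) hk); nia.
move=> w wle; apply: t_neq_of_wdist (in_star2_le_star wle) rc rd fe fe' rg rh _.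
apply: leq_trans lk; rewrite ltnS leq_mul2l; apply/orP; right.
by have := size_in_star2_le wle; rewrite !size_cat; lia.
Qed.

End FoolingScheme.

Lemma trans_rel_idempotent_power x : exists2 k, 0 < k &
  trans_rel (flatten (nseq k x) ++ flatten (nseq k x)) = trans_rel (flatten (nseq k x)).
Proof.
have [|k k_gt0 Ek] := @idempotent_power _ (fun n => trans_rel (flatten (nseq n x))).
  by move=> i j n /= Eij; rewrite !flatten_nseqD !trans_rel_cat Eij.
by exists k; rewrite // -flatten_nseqD.
Qed.

Lemma critical_idempotents u2 v2 u v : critical_tuple (Rt t) u2 v2 u v ->
  exists P E, [/\ (exists P1, P = P1 ++ u2), (exists E1, E = E1 ++ v2),
                  trans_rel (P ++ E) = trans_rel E, trans_rel (E ++ E) = trans_rel E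
                & ~ Rt t (u2 ++ E) (v2 ++ E)].
Proof.
move=> [_ _ [u1 Eu] [v1 Ev] crit].
have [k k_gt0 rel_PP] := trans_rel_idempotent_power u; set P := flatten (nseq k u) in rel_PP.
have [m m_gt0 rel_EE] := trans_rel_idempotent_power (P ++ v).
set E := flatten (nseq m (P ++ v)) in rel_EE.
have E_PvE : E = (P ++ v) ++ flatten (nseq m.-1 (P ++ v)) by rewrite /E -(prednK m_gt0).
exists P, E; split => //.
- by exists (flatten (nseq k.-1 u) ++ u1); rewrite -catA -Eu /P -(prednK k_gt0) flatten_nseqSr.
- exists (flatten (nseq m.-1 (P ++ v)) ++ P ++ v1).
  by rewrite -!catA -Ev /E -(prednK m_gt0) flatten_nseqSr catA.
- by rewrite E_PvE -!catA catA trans_rel_cat rel_PP -trans_rel_cat.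
apply: crit; apply/in_star2_flatten_nseq/in_star2_cat; last exact: in_star2r.
exact/in_star2_flatten_nseq/in_star2l.
Qed.

End RationalFunction.

Theorem proposition22 (Sigma Omega : finType)
  (t : seq Sigma -> option (seq Omega)) :
  rational_fun t ->
  suffix_closed (dom t) ->
  (exists u2 v2 u v, critical_tuple (Rt t) u2 v2 u v) ->
  exists u2 v2 u v (Z : seq Sigma -> Prop),
    linear_fooling_scheme t u2 v2 u v Z.
Proof.
move=> [T t_T] suffix_dom [u2 [v2 [u [v crit]]]].
have [P [E [u2P v2E rel_PE rel_EE not_Rt]]] := critical_idempotents T crit.
have [size_u2v2 _ _ _ _] := crit.
have [Z scheme] := fooling_scheme t_T suffix_dom u2P v2E size_u2v2 rel_PE rel_EE not_Rt.
by exists u2, v2, P, E, Z.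
Qed.
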